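(* Let $D=(V,A,w)$ be a weighted digraph and let $R\in\mathcal{B}(D)$. Then $\mathrm{mac}(D)\ge\frac{w(D)}{4}+\frac{w(R)}{4}$.
   Context: A weighted digraph $D=(V,A,w)$ is a digraph without loops or parallel arcs (opposite arcs allowed) with weights $w:A\to\mathbb{R}_{\ge0}$; $w(H)$ is the total arc weight of a subgraph $H$. For a partition $(X,Y)$ of $V$, $w(X,Y)$ is the total weight of arcs from $X$ to $Y$, and $\mathrm{mac}(D)=\max_{(X,Y)}w(X,Y)$. A subdigraph is connected if its underlying undirected graph is connected. $\mathcal{B}(D)$ denotes the set of bipartite subdigraphs $R$ of $D$ such that for every connected component $R_1$ of $R$ with bipartition $(X_1,Y_1)$, both $X_1$ and $Y_1$ are independent sets in $D$ (no arc of $D$ has both ends in $X_1$, nor both ends in $Y_1$). *)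

From mathcomp Require Import all_boot all_order all_algebra.
Set Implicit Arguments. Unset Strict Implicit. Unset Printing Implicit Defensive.
Import Order.TTheory GRing.Theory Num.Theory.
Local Open Scope ring_scope.

(* A weighted digraph D = (V, A, w): V a finite type, A : rel V the arc
   relation (A x y = there is an arc x -> y), irreflexive (no loops);
   parallel arcs are impossible by construction, opposite arcs allowed.
   w : V -> V -> R gives the weight of arc (x,y), required >= 0 on arcs;
   its values on non-arcs are irrelevant. *)

Definition weighted_digraph (R : realFieldType) (V : finType)
  (A : rel V) (w : V -> V -> R) : Prop :=
  irreflexive A /\ (forall x y, A x y -> 0 <= w x y).

Definition wtot (R : realFieldType) (V : finType) (B : rel V) (w : V -> V -> R) : R :=
  \sum_(x : V) \sum_(y : V | B x y) w x y.

Definition wcut (R : realFieldType) (V : finType) (A : rel V) (w : V -> V -> R)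
  (X Y : {set V}) : R :=
  \sum_(x in X) \sum_(y in Y | A x y) w x y.

Definition mac (R : realFieldType) (V : finType) (A : rel V) (w : V -> V -> R) : R :=
  \big[Num.max/wcut A w set0 (~: set0)]_(X : {set V}) wcut A w X (~: X).

Definition subdigraph (V : finType) (A : rel V) (VR : {set V}) (AR : rel V) : Prop :=
  forall x y, AR x y -> [&& A x y, x \in VR & y \in VR].

Definition und (V : finType) (AR : rel V) : rel V := fun x y => AR x y || AR y x.

Definition independent (V : finType) (A : rel V) (X : {set V}) : Prop :=
  forall x y, x \in X -> y \in X -> ~~ A x y.

(* R = (VR, AR) in B(D): R is a bipartite subdigraph, witnessed by a proper
   2-colouring c of R (every arc of R joins the two colour classes), such that
   for every connected component C of R (the set of vertices connected to some
   x in VR in the underlying graph of R), the two sides of its bipartition,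
   C with colour true and C with colour false, are independent in D. *)
Definition in_B (V : finType) (A : rel V) (VR : {set V}) (AR : rel V) : Prop :=
  subdigraph A VR AR /\
  exists c : V -> bool,
    (forall x y, AR x y -> c x != c y) /\
    (forall x, x \in VR ->
       independent A [set y | connect (und AR) x y & c y] /\
       independent A [set y | connect (und AR) x y & ~~ c y]).

From mathcomp Require Import all_boot all_order all_algebra zify lra.
Import Order.TTheory GRing.Theory Num.Theory.
Local Open Scope ring_scope.

(* Proof idea (a derandomized random-signing argument).  Let c be the
   2-colouring of R from the definition of B(D), and pick in every connected
   component of (the underlying graph of) R a root r(v).  For every sign vector
   b : V -> bool put X_b = {v | b(r v) xor c v}, i.e. each component keeps or
   swaps its two colour classes independently.  An arc x -> y of D inside one
   component joins different colours (the colour classes are independent in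
   D), so it is cut by a uniform X_b with probability 1/2; an arc between two
   components is cut with probability 1/4.  Arcs of R lie inside components,
   hence the expected cut is at least w(D)/4 + w(R)/4, and so is mac(D). *)

Section SignVectors.

Variable V : finType.

Definition flip (k : V) (b : {ffun V -> bool}) : {ffun V -> bool} :=
  [ffun z => if z == k then ~~ b z else b z].

Local Notation coord k u := [set b : {ffun V -> bool} | b k == u].

Lemma flipK (k : V) : involutive (flip k).
Proof. by move=> b; apply/ffunP=> z; rewrite !ffunE; case: eqP => // _; rewrite negbK. Qed.

Lemma flip_at (k : V) (b : {ffun V -> bool}) : flip k b k = ~~ b k.
Proof. by rewrite ffunE eqxx. Qed.

Lemma flip_off (k z : V) (b : {ffun V -> bool}) : z != k -> flip k b z = b z.
Proof. by move=> zk; rewrite ffunE (negPf zk). Qed.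

Lemma card_fix_coord (S : {set {ffun V -> bool}}) (k : V) (u : bool) :
  flip k @^-1: S = S ->
  (2 * #|S :&: coord k u| = #|S|)%N.
Proof.
move=> flipS.
have swap : flip k @^-1: (S :&: coord k u) = S :\: coord k u.
  apply/setP=> b; rewrite !inE flip_at.
  have -> : (flip k b \in S) = (b \in S) by rewrite -{2}flipS inE.
  by rewrite andbC; case: (b k); case: u.
have := cardsID (coord k u) S.
rewrite -swap card_preimset; last exact: can_inj (flipK k).
by rewrite mul2n -addnn.
Qed.

Lemma card_sign1 (i : V) (u : bool) :
  (2 * #|coord i u| = #|{ffun V -> bool}|)%N.
Proof.
rewrite -cardsT -(setTI (coord i u)) card_fix_coord //.
by apply/setP=> b; rewrite !inE.
Qed.

Lemma card_sign2 (i j : V) (u v : bool) : i != j ->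
  (4 * #|[set b : {ffun V -> bool} | (b i == u) && (b j == v)]|
     = #|{ffun V -> bool}|)%N.
Proof.
move=> ij.
have stable : flip j @^-1: coord i u = coord i u.
  by apply/setP=> b; rewrite !inE flip_off.
have pair : coord i u :&: coord j v
        = [set b : {ffun V -> bool} | (b i == u) && (b j == v)].
  by apply/setP=> b; rewrite !inE.
by rewrite -(card_sign1 i u) -(card_fix_coord _ _ v stable) pair mulnA.
Qed.

End SignVectors.

Section CutAveraging.

Variables (R : realFieldType) (V : finType) (A : rel V) (w : V -> V -> R).

Lemma wcut_le_mac (X : {set V}) : wcut A w X (~: X) <= mac A w.
Proof. by rewrite /mac; apply: (le_bigmax _ (fun X : {set V} => wcut A w X (~: X))). Qed.

Lemma wcut_arcwise (X : {set V}) :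
  wcut A w X (~: X) =
  \sum_x \sum_(y | A x y) w x y * ((x \in X) && (y \notin X))%:R.
Proof.
rewrite /wcut big_mkcond; apply: eq_bigr => x _.
case: (x \in X) => /=; last by rewrite big1 // => y _; rewrite mulr0.
rewrite big_mkcondl; apply: eq_bigr => y _.
by rewrite inE; case: (y \in X); rewrite ?mulr1 ?mulr0.
Qed.

Lemma sum_wcut (T : finType) (X : T -> {set V}) :
  \sum_t wcut A w (X t) (~: X t) =
  \sum_x \sum_(y | A x y)
     w x y * #|[set t | (x \in X t) && (y \notin X t)]|%:R.
Proof.
under eq_bigr do rewrite wcut_arcwise.
rewrite exchange_big; apply: eq_bigr => x _.
rewrite exchange_big; apply: eq_bigr => y _.
rewrite -mulr_sumr -sum1_card natr_sum [in RHS]big_mkcond; congr (_ * _).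
by apply: eq_bigr => t _; rewrite inE; case: (_ && _).
Qed.

Lemma wtot_add_sub (B : rel V) : subrel B A ->
  wtot A w + wtot B w = \sum_x \sum_(y | A x y) w x y * (1 + B x y)%:R.
Proof.
move=> BA; rewrite /wtot -big_split; apply: eq_bigr => x _ /=.
rewrite big_mkcond [X in _ + X]big_mkcond [in RHS]big_mkcond -big_split.
apply: eq_bigr => y _ /=.
case Bxy: (B x y); first by rewrite (BA _ _ Bxy) natrD mulrDr mulr1.
by case: (A x y); rewrite addr0 ?mulr1.
Qed.

Lemma mac_ge_average (T : finType) (X : T -> {set V}) (B : rel V) :
  (forall x y, A x y -> 0 <= w x y) -> subrel B A -> (0 < #|T|)%N ->
  (forall x y, A x y ->
     #|T| * (1 + B x y) <= 4 * #|[set t | (x \in X t) && (y \notin X t)]|)%N ->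
  wtot A w / 4%:R + wtot B w / 4%:R <= mac A w.
Proof.
move=> wpos BA T_gt0 often_cut.
have avg : \sum_t wcut A w (X t) (~: X t) <= #|T|%:R * mac A w.
  rewrite mulr_natl -sumr_const; apply: ler_sum => t _; exact: wcut_le_mac.
have total :
    #|T|%:R * (wtot A w + wtot B w) <= 4%:R * \sum_t wcut A w (X t) (~: X t).
  rewrite wtot_add_sub // sum_wcut !mulr_sumr; apply: ler_sum => x _.
  rewrite !mulr_sumr; apply: ler_sum => y Axy.
  rewrite mulrCA [X in _ <= X]mulrCA; apply: ler_wpM2l; first exact: wpos.
  by rewrite -!natrM ler_nat; apply: often_cut.
have N_gt0 : 0 < #|T|%:R :> R by rewrite ltr0n.
nra.
Qed.

End CutAveraging.

Section ComponentSigning.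

Variables (V : finType) (r : V -> V) (c : V -> bool).

(* The side chosen by the sign vector b: the class (b (r v) (+) c v) of v, so
   that all vertices with the same root r v are kept or swapped together. *)
Definition signed_side (b : {ffun V -> bool}) : {set V} :=
  [set v | b (r v) (+) c v].

Lemma card_signed_cut (x y : V) : (r x = r y -> c x != c y) ->
  (#|{ffun V -> bool}| * (1 + (r x == r y)) <=
     4 * #|[set b | (x \in signed_side b) && (y \notin signed_side b)]|)%N.
Proof.
move=> colours; case: eqVneq => [same | diff].
  have cy : c y = ~~ c x by move: (colours same); case: (c x); case: (c y).
  have -> : [set b | (x \in signed_side b) && (y \notin signed_side b)] =
            [set b : {ffun V -> bool} | b (r x) == ~~ c x].
    by apply/setP=> b; rewrite !inE -same cy; case: (b (r x)); case: (c x).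
  by rewrite -(card_sign1 _ (r x) (~~ c x)); lia.
have -> : [set b | (x \in signed_side b) && (y \notin signed_side b)] =
          [set b : {ffun V -> bool} | (b (r x) == ~~ c x) && (b (r y) == c y)].
  by apply/setP=> b; rewrite !inE; case: (b (r x)); case: (b (r y));
     case: (c x); case: (c y).
by rewrite -(card_sign2 _ _ _ (~~ c x) (c y) diff); lia.
Qed.

End ComponentSigning.

(* In a member (VR, AR) of B(D) with colouring c, an arc of D between two
   vertices of the same component of R joins different colours: either the
   component is a single vertex outside VR (and D has no loops), or both ends
   lie in one side of the component's bipartition, which is independent. *)
Lemma in_B_arc_colours (V : finType) (A : rel V) (VR : {set V}) (AR : rel V)
    (c : V -> bool) (x y : V) :
  irreflexive A -> subdigraph A VR AR ->
  (forall z, z \in VR ->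
     independent A [set v | connect (und AR) z v & c v] /\
     independent A [set v | connect (und AR) z v & ~~ c v]) ->
  A x y -> connect (und AR) x y -> c x != c y.
Proof.
move=> irrA subR indep Axy xy.
have [xVR | xVR] := boolP (x \in VR); last first.
  case/connectP: xy => [[|z p] /=]; first by move=> _ yx; rewrite yx irrA in Axy.
  by case/andP => /orP[] /subR /and3P[_ h1 h2]; rewrite ?h1 ?h2 in xVR.
have [indT indF] := indep x xVR.
apply/negP => /eqP cxy; case cx: (c x).
  by move: (indT x y); rewrite !inE connect0 xy -cxy cx Axy => /(_ isT isT).
by move: (indF x y); rewrite !inE connect0 xy -cxy cx Axy => /(_ isT isT).
Qed.

Theorem mainTheorem4 (R : realFieldType) (V : finType) (A : rel V)
  (w : V -> V -> R) (VR : {set V}) (AR : rel V) :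
  weighted_digraph A w ->
  in_B A VR AR ->
  mac A w >= wtot A w / 4%:R + wtot AR w / 4%:R.
Proof.
move=> [irrA wpos] [subR [c [_ indep]]].
have sym : connect_sym (und AR).
  by apply: sym_connect_sym => x y; rewrite /und orbC.
pose r := fingraph.root (und AR).
have ARA : subrel AR A by move=> x y /subR /and3P[].
have AR_root x y : AR x y -> r x = r y.
  by move=> ARxy; apply/(fingraph.rootP sym)/connect1; rewrite /und ARxy.
apply: (mac_ge_average _ _ _ _ _ (signed_side _ r c) AR) => //.
  by apply/card_gt0P; exists [ffun=> true].
move=> x y Axy; apply: leq_trans (card_signed_cut _ r c x y _).
  apply: leq_mul => //; rewrite leq_add2l; case ARxy: (AR x y) => //.
  by rewrite (AR_root _ _ ARxy) eqxx.
move=> /(fingraph.rootP sym).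
exact: (in_B_arc_colours _ _ _ _ c x y irrA subR indep Axy).
Qed.
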